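(* Let $V=\mathbb{K}^r$ be a finite-dimensional vector space over a field $\mathbb{K}$ and let $\Gamma$ be a locally finite graph. Then a locally specifiable linear map $\tau:V^\Gamma\to V^\Gamma$ is surjective if and only if its transpose $\tau'$ is pre-injective.
   Context: $V^\Gamma$ is the space of all maps from the vertex set of $\Gamma$ to $V$, and $V^\Gamma_0$ the subspace of finitely supported maps. A linear map $\tau:V^\Gamma\to V^\Gamma$ is locally specifiable if $\tau(f)(x)$ depends only on $f(x)$ and the values $f(y)$ for $y\sim x$; equivalently there are $r\times r$ matrices $A_{xy}$ (for $y=x$ or $y\sim x$) with $\tau(f)(x)=A_{xx}f(x)+\sum_{y\sim x}A_{xy}f(y)$. Its transpose $\tau'$ is the locally specifiable linear map whose matrix with respect to the basis $\{\delta_x^i\}$ of $V^\Gamma_0$ ($\delta_x^i(x)=e_i$, $\delta_x^i(y)=0$ for $y\ne x$) is the transpose of that of $\tau$, i.e. $\tau'(f)(x)=A_{xx}^{T}f(x)+\sum_{y\sim x}A_{yx}^{T}f(y)$. A linear map on $V^\Gamma$ is pre-injective if its restriction to $V^\Gamma_0$ is injective. *)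

From HB Require Import structures.
From mathcomp Require Import all_boot all_order all_algebra.
Set Implicit Arguments. Unset Strict Implicit. Unset Printing Implicit Defensive.
Import GRing.Theory.
Local Open Scope ring_scope.

(* A locally finite graph Gamma on vertex type T (an eqType, possibly infinite)
   is given by its neighbour lists: nbrs x is the finite duplicate-free list of
   the neighbours of x; adjacency y ~ x means y \in nbrs x. *)
Definition locally_finite_graph (T : eqType) (nbrs : T -> seq T) : Prop :=
  (forall x, uniq (nbrs x)) /\
  (forall x y, (y \in nbrs x) = (x \in nbrs y)) /\
  (forall x, x \notin nbrs x).

Definition cfg (K : fieldType) (r : nat) (T : Type) := T -> 'cV[K]_r.

Definition locally_specifiable_by (K : fieldType) (r : nat) (T : eqType)
  (nbrs : T -> seq T) (tau : cfg K r T -> cfg K r T) (A : T -> T -> 'M[K]_r) : Prop :=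
  forall f x, tau f x = A x x *m f x + \sum_(y <- nbrs x) A x y *m f y.

Definition transpose_map (K : fieldType) (r : nat) (T : eqType)
  (nbrs : T -> seq T) (A : T -> T -> 'M[K]_r) : cfg K r T -> cfg K r T :=
  fun f x => (A x x)^T *m f x + \sum_(y <- nbrs x) (A y x)^T *m f y.

Definition fin_supp (K : fieldType) (r : nat) (T : eqType) (f : cfg K r T) : Prop :=
  exists s : seq T, forall x, x \notin s -> f x = 0.

Definition pre_injective (K : fieldType) (r : nat) (T : eqType)
  (sigma : cfg K r T -> cfg K r T) : Prop :=
  forall f g, fin_supp f -> fin_supp g -> sigma f = sigma g -> f = g.

Definition surjective_map (A B : Type) (h : A -> B) : Prop :=
  forall b, exists a, h a = b.

(* Pair a finitely supported g with an arbitrary f by <f, g> = sum_x f(x)^T g(x).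
   Locality of tau makes tau' its adjoint: <tau f, g> = <f, tau' g>.  If tau is
   surjective, choosing f with tau f = delta_x^i shows that the (x, i) coordinate
   of any finitely supported g with tau' g = 0 vanishes.  Conversely, if tau' is
   pre-injective then tau' g |-> <h, g> is a well-defined linear functional on
   tau'(V^Gamma_0); extend it by Zorn's lemma to a linear functional phi on all of
   V^Gamma and put f(x)_i := phi(delta_x^i).  Then
   <tau f, delta_x^i> = phi(tau' delta_x^i) = <h, delta_x^i>, that is, tau f = h. *)

From HB Require Import structures.
From mathcomp Require Import all_boot all_order all_algebra.
From mathcomp Require Import boolp classical_sets functions.
Set Implicit Arguments. Unset Strict Implicit. Unset Printing Implicit Defensive.
Import GRing.Theory.
Local Open Scope ring_scope.
Local Open Scope classical_set_scope.

Section LinearGraph.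
Variables (K : fieldType) (V W : lmodType K).
Implicit Types (G : set (V * W)) (u v : V) (a b : W).

Definition linear_graph G : Prop :=
  [/\ G (0, 0),
      forall c u v a b, G (u, a) -> G (v, b) -> G (c *: u + v, c *: a + b) &
      forall u a b, G (u, a) -> G (u, b) -> a = b].

Lemma linear_graphZ G c u a : linear_graph G -> G (u, a) -> G (c *: u, c *: a).
Proof. by move=> [G00 Glin _] Gua; rewrite -[c *: u]addr0 -[c *: a]addr0; apply: Glin. Qed.

Lemma linear_graph_directed G :
  G (0, 0) ->
  (forall p q, G p -> G q -> exists H, [/\ linear_graph H, H `<=` G, H p & H q]) ->
  linear_graph G.
Proof.
move=> G00 dirG; split=> // [c u v a b Gua Gvb | u a b Gua Gub].
  by have [H [[_ Hlin _] HG Hua Hvb]] := dirG _ _ Gua Gvb; apply/HG/Hlin.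
by have [H [[_ _ Hfun] _ Hua Hub]] := dirG _ _ Gua Gub; apply: Hfun Hua Hub.
Qed.

Lemma linear_graph_chain_union G0 (F : set (set (V * W))) :
  linear_graph G0 -> (forall X, F X -> linear_graph (G0 `|` X)) ->
  total_on F subset -> linear_graph (G0 `|` \bigcup_(X in F) X).
Proof.
move=> linG0 linF totF; apply: linear_graph_directed; first by left; case: linG0.
have subU X : F X -> G0 `|` X `<=` G0 `|` \bigcup_(X in F) X.
  by move=> FX p [G0p|Xp]; [left|right; exists X].
move=> p q [G0p|[X FX Xp]] [G0q|[Y FY Yq]].
- by exists G0; split=> // ? G0p'; left.
- by exists (G0 `|` Y); split; [exact: linF|exact: subU|left|right].
- by exists (G0 `|` X); split; [exact: linF|exact: subU|right|left].
- have [XY|YX] := totF X Y FX FY.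
  + by exists (G0 `|` Y); split; [exact: linF|exact: subU|right; exact: XY|right].
  + by exists (G0 `|` X); split; [exact: linF|exact: subU|right|right; exact: YX].
Qed.

(* The linear graph generated by G and the pair (u, 0). *)
Definition graph_extension G u : set (V * W) :=
  [set p | exists t, G (p.1 - t *: u, p.2)].

Lemma linear_graph_extension G u :
  linear_graph G -> (forall a, ~ G (u, a)) -> linear_graph (graph_extension G u).
Proof.
move=> linG Gu; have [G00 Glin Gfun] := linG; split.
- by exists 0; rewrite scale0r subr0.
- move=> c v w a b [s Gva] [t Gwb]; exists (c * s + t) => /=.
  rewrite scalerDl -scalerA opprD addrACA -scalerBr; exact: Glin.
move=> v a b [s /= Gva] [t /= Gvb]; have [est|nst] := eqVneq s t.
  by move: Gva; rewrite est => /Gfun; apply.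
have Gtsu : G ((t - s) *: u, - b + a).
  have -> : (t - s) *: u = -1 *: (v - t *: u) + (v - s *: u).
    by rewrite scaleN1r opprB addrA subrK scalerBl.
  by rewrite -[- b]scaleN1r; apply: Glin.
have nz : t - s != 0 by rewrite subr_eq0 eq_sym.
case: (Gu ((t - s)^-1 *: (- b + a))).
by rewrite -[u]scale1r -(mulVf nz) -scalerA; exact: linear_graphZ.
Qed.

Lemma linear_graph_total_extension G0 :
  linear_graph G0 ->
  exists G, [/\ linear_graph G, G0 `<=` G & forall u, exists a, G (u, a)].
Proof.
move=> linG0.
(* The union with G0 keeps the empty chain, whose union is set0, admissible. *)
have [X [linX Xmax]] := Zorn_bigcup (P := fun X => linear_graph (G0 `|` X))
  (fun F => linear_graph_chain_union (F := F) linG0).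
exists (G0 `|` X); split=> // u.
apply: contrapT => /forallNP Xu.
have linE := linear_graph_extension linX Xu.
have subE : G0 `|` X `<=` graph_extension (G0 `|` X) u.
  by case=> v a Gva; exists 0; rewrite scale0r subr0.
apply: (Xmax (graph_extension (G0 `|` X) u)); last first.
  by rewrite setUidr // => p G0p; apply: subE; left.
split=> [p Xp|EX]; first by apply: subE; right.
have /EX Xu0 : graph_extension (G0 `|` X) u (u, 0).
  by exists 1; rewrite /= scale1r subrr; left; case: linG0.
by apply: (Xu 0); right.
Qed.

Lemma linear_graph_extend G0 :
  linear_graph G0 -> exists phi : {linear V -> W}, forall u a, G0 (u, a) -> phi u = a.
Proof.
move=> /linear_graph_total_extension[G [[_ Glin Gfun] G0G /choice[phi Gphi]]].
have phi_lin : linear phi.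
  by move=> c u v; apply: (Gfun (c *: u + v)); [exact: Gphi | apply: Glin].
exists (HB.pack_for {linear V -> W} phi (GRing.isLinear.Build K V W *:%R phi phi_lin)).
by move=> u a /G0G; apply: Gfun.
Qed.

End LinearGraph.

Lemma big_uniq_memC (I : eqType) (M : nmodType) (s1 s2 : seq I) (F : I -> M) :
  uniq s1 -> uniq s2 ->
  \sum_(x <- s1 | x \in s2) F x = \sum_(x <- s2 | x \in s1) F x.
Proof.
move=> u1 u2; rewrite -big_filter -[RHS]big_filter.
apply/perm_big/uniq_perm; rewrite ?filter_uniq // => x.
by rewrite !mem_filter andbC.
Qed.

Lemma eq_big_uniq_supp (I : eqType) (M : nmodType) (s1 s2 : seq I) (F : I -> M) :
  uniq s1 -> uniq s2 ->
  (forall x, x \in s1 -> x \notin s2 -> F x = 0) ->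
  (forall x, x \in s2 -> x \notin s1 -> F x = 0) ->
  \sum_(x <- s1) F x = \sum_(x <- s2) F x.
Proof.
move=> u1 u2 F1 F2.
rewrite (bigID (mem s2)) /= [X in _ + X]big1_seq ?addr0; last first.
  by move=> x /andP[xs2 xs1]; apply: F1.
rewrite [RHS](bigID (mem s1)) /= [X in _ + X]big1_seq ?addr0; last first.
  by move=> x /andP[xs1 xs2]; apply: F2.
exact: big_uniq_memC.
Qed.

(* Canonical structures do not see through the definition [cfg]. *)
HB.instance Definition _ (K : fieldType) (r : nat) (T : Type) :=
  GRing.Lmodule.copy (cfg K r T) (T -> 'cV[K]_r).

Lemma mul_tr_delta_col (R : comPzRingType) (n : nat) (i : 'I_n) (v : 'cV[R]_n) :
  (delta_mx i 0)^T *m v = (v i 0)%:M.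
Proof. by rewrite trmx_delta -rowE [LHS]mx11_scalar !mxE. Qed.

Section Configurations.
Variables (K : fieldType) (r : nat) (T : eqType) (nbrs : T -> seq T).
Variable A : T -> T -> 'M[K]_r.
Hypothesis nbrs_uniq : forall x, uniq (nbrs x).
Hypothesis nbrs_sym : forall x y, (y \in nbrs x) = (x \in nbrs y).
Implicit Types (s : seq T) (f g h u : cfg K r T).

Definition supported_on s g := forall x, x \notin s -> g x = 0.

Definition pairing s h g : 'M[K]_1 := \sum_(x <- s) (h x)^T *m g x.

Definition delta_cfg x (i : 'I_r) : cfg K r T :=
  fun y => if y == x then delta_mx i 0 else 0.

Definition nbhd s := undup (s ++ flatten [seq nbrs x | x <- s]).

Lemma nbhd_uniq s : uniq (nbhd s). Proof. exact: undup_uniq. Qed.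

Lemma mem_nbhd s x : x \in s -> x \in nbhd s.
Proof. by rewrite mem_undup mem_cat => ->. Qed.

Lemma nbrs_sub_nbhd s x y : x \in s -> y \in nbrs x -> y \in nbhd s.
Proof.
by move=> xs yx; rewrite mem_undup mem_cat; apply/orP; right; apply/flatten_mapP; exists x.
Qed.

Lemma supported_on_undup_catl s1 s2 g :
  supported_on s1 g -> supported_on (undup (s1 ++ s2)) g.
Proof. by move=> gs x; rewrite mem_undup mem_cat negb_or => /andP[/gs]. Qed.

Lemma supported_on_undup_catr s1 s2 g :
  supported_on s2 g -> supported_on (undup (s1 ++ s2)) g.
Proof. by move=> gs x; rewrite mem_undup mem_cat negb_or => /andP[_ /gs]. Qed.

Lemma supported_onZD s c g1 g2 :
  supported_on s g1 -> supported_on s g2 -> supported_on s (c *: g1 + g2).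
Proof. by move=> g1s g2s x xs; rewrite !fctE g1s // g2s // scaler0 addr0. Qed.

Lemma supported_on_delta x i : supported_on [:: x] (delta_cfg x i).
Proof. by move=> y; rewrite mem_seq1 /delta_cfg => /negbTE ->. Qed.

Lemma eq_pairing_supp s s' h g : uniq s -> uniq s' ->
  supported_on s g -> supported_on s' g -> pairing s h g = pairing s' h g.
Proof.
move=> us us' gs gs'; apply: eq_big_uniq_supp => // x _ xs.
  by rewrite gs' // mulmx0.
by rewrite gs // mulmx0.
Qed.

Lemma pairing_is_linear s h : linear (pairing s h).
Proof.
move=> c g1 g2; rewrite /pairing scaler_sumr -big_split; apply: eq_bigr => x _ /=.
by rewrite mulmxDr scalemxAr.
Qed.

Lemma pairing_deltal s g x i : uniq s -> supported_on s g ->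
  pairing s (delta_cfg x i) g = (g x i 0)%:M.
Proof.
move=> us gs; have delta_ne y : y != x -> (delta_cfg x i y)^T *m g y = 0.
  by rewrite /delta_cfg => /negbTE ->; rewrite trmx0 mul0mx.
have [xs|xNs] := boolP (x \in s).
  rewrite /pairing (bigD1_seq x) //= big1 ?addr0 => [|y /delta_ne //].
  by rewrite /delta_cfg eqxx mul_tr_delta_col.
rewrite gs // mxE raddf0 /pairing big1_seq // => y /andP[_ ys].
by apply: delta_ne; apply: contraNneq xNs => <-.
Qed.

Lemma pairing_delta1r h x i : pairing [:: x] h (delta_cfg x i) = (h x i 0)%:M.
Proof.
rewrite /pairing big_seq1 /delta_cfg eqxx -[LHS]trmxK trmx_mul trmxK.
by rewrite mul_tr_delta_col tr_scalar_mx.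
Qed.

HB.instance Definition _ s h :=
  GRing.isLinear.Build K (cfg K r T) 'M[K]_1 _ (pairing s h) (pairing_is_linear s h).

Lemma transpose_map_is_linear : linear (transpose_map nbrs A).
Proof.
move=> c f g; apply/funext => x; rewrite /transpose_map /= !fctE.
rewrite mulmxDr -scalemxAr scalerDr addrACA scaler_sumr -big_split /=; congr (_ + _).
by apply: eq_bigr => y _; rewrite mulmxDr scalemxAr.
Qed.

HB.instance Definition _ :=
  GRing.isLinear.Build K (cfg K r T) (cfg K r T) _ (transpose_map nbrs A)
    transpose_map_is_linear.

Lemma transpose_map_supp s g :
  supported_on s g -> supported_on (nbhd s) (transpose_map nbrs A g).
Proof.
move=> gs y yN; have yNs : y \notin s by apply: contra yN; apply: mem_nbhd.
rewrite /transpose_map gs // mulmx0 add0r big1_seq // => x /andP[_ xy].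
rewrite gs ?mulmx0 //; apply: contra yN => xs.
by apply: nbrs_sub_nbhd xs _; rewrite nbrs_sym.
Qed.

Lemma exchange_big_nbrs (M : nmodType) s (psi : T -> T -> M) :
  uniq s -> (forall x y, x \notin s -> psi x y = 0) ->
  \sum_(x <- s) \sum_(y <- nbrs x) psi x y =
  \sum_(y <- nbhd s) \sum_(x <- nbrs y) psi x y.
Proof.
move=> us psi0.
transitivity (\sum_(x <- s) \sum_(y <- nbhd s | y \in nbrs x) psi x y).
  apply: eq_big_seq => x xs; rewrite -big_uniq_memC ?nbhd_uniq // [RHS]big_mkcond.
  by apply: eq_big_seq => y yx; rewrite (nbrs_sub_nbhd xs yx).
rewrite (exchange_big_dep xpredT) //=; apply: congr_big => // y _.
rewrite (eq_bigl (mem (nbrs y))) => [|x]; last by rewrite nbrs_sym.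
rewrite big_uniq_memC // [LHS]big_mkcond.
by apply: eq_bigr => x _; case: ifP => // /negbT /psi0 ->.
Qed.

Lemma pairing_adjoint tau s f g :
  locally_specifiable_by nbrs tau A -> uniq s -> supported_on s g ->
  pairing s (tau f) g = pairing (nbhd s) f (transpose_map nbrs A g).
Proof.
move=> tauE us gs; pose psi x y := (f y)^T *m ((A x y)^T *m g x).
have tauT x : (tau f x)^T *m g x =
    (f x)^T *m ((A x x)^T *m g x) + \sum_(y <- nbrs x) psi x y.
  rewrite tauE linearD linear_sum mulmxDl mulmx_suml /= trmx_mul -mulmxA; congr (_ + _).
  by apply: eq_bigr => y _; rewrite trmx_mul -mulmxA.
have transposeT y : (f y)^T *m transpose_map nbrs A g y =
    (f y)^T *m ((A y y)^T *m g y) + \sum_(x <- nbrs y) psi x y.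
  by rewrite mulmxDr mulmx_sumr.
rewrite /pairing (eq_bigr _ (fun x _ => tauT x)) (eq_bigr _ (fun y _ => transposeT y)).
rewrite !big_split /= exchange_big_nbrs // => [|x y /gs gx0]; last first.
  by rewrite /psi gx0 !mulmx0.
congr (_ + _); apply: eq_big_uniq_supp; rewrite ?nbhd_uniq // => x.
  by move=> /mem_nbhd ->.
by move=> _ /gs ->; rewrite !mulmx0.
Qed.

Lemma cfg_expand s u : uniq s -> supported_on s u ->
  u = \sum_(y <- s) \sum_(i < r) u y i 0 *: delta_cfg y i.
Proof.
move=> us su; apply/funext => x; rewrite fct_sumE.
have term y : (\sum_(i < r) u y i 0 *: delta_cfg y i) x = if y == x then u x else 0.
  rewrite fct_sumE /delta_cfg; have [->|yx] := eqVneq y x; last first.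
    by apply: big1 => i _; rewrite !fctE eq_sym (negbTE yx) scaler0.
  rewrite [RHS]matrix_sum_delta; apply: eq_bigr => i _.
  by rewrite big_ord1 !fctE eqxx.
rewrite (eq_bigr _ (fun y _ => term y)) -big_mkcond /= -big_filter.
have [xs|xNs] := boolP (x \in s); first by rewrite filter_pred1_uniq // big_seq1.
by rewrite su // big1.
Qed.

Definition representing_cfg (phi : cfg K r T -> 'M[K]_1) : cfg K r T :=
  fun x => \col_i phi (delta_cfg x i) 0 0.

Lemma linear_pairing (phi : {linear cfg K r T -> 'M[K]_1}) s u :
  uniq s -> supported_on s u -> phi u = pairing s (representing_cfg phi) u.
Proof.
move=> us su; rewrite {1}(cfg_expand us su) !linear_sum; apply: eq_bigr => y _.
rewrite linear_sum [RHS]mx11_scalar; apply/matrixP => i j; rewrite !ord1 !mxE.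
rewrite summxE eqxx mulr1n; apply: eq_bigr => k _.
by rewrite linearZ !mxE mulrC.
Qed.

Lemma surjective_pre_injective_transpose tau :
  locally_specifiable_by nbrs tau A -> surjective_map tau ->
  pre_injective (transpose_map nbrs A).
Proof.
move=> tauE tau_surj f g [s1 f1] [s2 f2] tr_fg.
have ds : supported_on (undup (s1 ++ s2)) (-1 *: f + g).
  by apply: supported_onZD; [exact: supported_on_undup_catl | exact: supported_on_undup_catr].
have tr_d : transpose_map nbrs A (-1 *: f + g) = 0.
  by rewrite linearP /= tr_fg scaleN1r addNr.
suff /eqP : -1 *: f + g = 0 by rewrite scaleN1r addrC subr_eq0 => /eqP ->.
apply/funext => x; apply/matrixP => i j; rewrite !ord1 [RHS]mxE.
have [h tau_h] := tau_surj (delta_cfg x i).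
have := pairing_adjoint h tauE (undup_uniq _) ds.
rewrite tau_h pairing_deltal ?undup_uniq // tr_d raddf0.
by move/matrixP/(_ 0 0); rewrite !mxE.
Qed.

Definition transpose_pairing_graph h : set (cfg K r T * 'M[K]_1) :=
  [set p | exists g s, [/\ uniq s, supported_on s g,
    p.1 = transpose_map nbrs A g & p.2 = pairing s h g]].

Lemma linear_transpose_pairing_graph h :
  pre_injective (transpose_map nbrs A) -> linear_graph (transpose_pairing_graph h).
Proof.
move=> tr_inj; split.
- by exists 0, [::]; split; rewrite ?raddf0.
- move=> c _ _ _ _ [g1 [s1 [us1 g1s /= -> ->]]] [g2 [s2 [us2 g2s /= -> ->]]].
  set s := undup (s1 ++ s2); have us : uniq s := undup_uniq _.
  have g1s' : supported_on s g1 := supported_on_undup_catl g1s.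
  have g2s' : supported_on s g2 := supported_on_undup_catr g2s.
  exists (c *: g1 + g2), s; split; rewrite ?linearP //.
    exact: supported_onZD.
  by rewrite (eq_pairing_supp _ us1 us g1s g1s') (eq_pairing_supp _ us2 us g2s g2s').
- move=> _ _ _ [g1 [s1 [us1 g1s /= -> ->]]] [g2 [s2 [us2 g2s /= tr_g ->]]].
  have eg := tr_inj _ _ (ex_intro _ s1 g1s) (ex_intro _ s2 g2s) tr_g.
  by rewrite -eg (eq_pairing_supp _ us1 us2 g1s) // eg.
Qed.

Lemma pre_injective_transpose_surjective tau :
  locally_specifiable_by nbrs tau A -> pre_injective (transpose_map nbrs A) ->
  surjective_map tau.
Proof.
move=> tauE tr_inj h.
have [phi phiE] := linear_graph_extend (linear_transpose_pairing_graph h tr_inj).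
exists (representing_cfg phi); apply/funext => x; apply/matrixP => i j; rewrite ord1.
have dx : supported_on [:: x] (delta_cfg x i) := supported_on_delta i.
have := pairing_adjoint (representing_cfg phi) tauE (erefl : uniq [:: x]) dx.
rewrite -linear_pairing ?nbhd_uniq //; last exact: transpose_map_supp.
rewrite (phiE _ (pairing [:: x] h (delta_cfg x i))); last by exists (delta_cfg x i), [:: x].
by rewrite !pairing_delta1r => /matrixP/(_ 0 0); rewrite !mxE eqxx !mulr1n.
Qed.

End Configurations.

Theorem theorem1p8 (K : fieldType) (r : nat) (T : eqType) (nbrs : T -> seq T)
  (tau : cfg K r T -> cfg K r T) (A : T -> T -> 'M[K]_r) :
  locally_finite_graph nbrs ->
  locally_specifiable_by nbrs tau A ->
  (surjective_map tau <-> pre_injective (transpose_map nbrs A)).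
Proof.
move=> [nbrs_uniq [nbrs_sym _]] tauE; split.
  exact: surjective_pre_injective_transpose.
exact: pre_injective_transpose_surjective.
Qed.
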